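(* For any thresholds $a_{ij}$, the adaptive matrix SPRT $\hat D=(\hat T,\hat d)$ satisfies $$\sup_{\theta\in\Theta_i}\mathsf P_\theta(\hat d=j)\le e^{-a_{ij}}\quad\text{for all }i,j\in\mathcal N_0,\ i\ne j.$$ In particular, if $a_{ij}=\log(1/\alpha_{ij})$ then $\hat D\in\mathbb C(\boldsymbol\alpha)$.
   Context: Observations $X_1,X_2,\dots$ with probability measures $\{\mathsf P_\theta,\theta\in\Theta\}$, $\Theta\subseteq\mathbb R^l$; $\mathcal F_n=\sigma(X_1,\dots,X_n)$, $\mathbf X_1^n=(X_1,\dots,X_n)$. The restriction of $\mathsf P_\theta$ to $\mathcal F_n$ has density $p_{\theta,n}(\mathbf X_1^n)=\prod_{t=1}^n f_{\theta,t}(X_t\mid\mathbf X_1^{t-1})$ w.r.t. a $\sigma$-finite measure (each $f_{\theta,t}(\cdot\mid\mathbf X_1^{t-1})$ a conditional density), and these restrictions are mutually absolutely continuous across $\theta$. $\Theta$ is the disjoint union of $\Theta_0,\dots,\Theta_N$ ($N\ge1$) and an indifference zone $\Theta_{\rm in}$ (possibly empty); $\mathcal N_0=\{0,\dots,N\}$. A test $D=(T,d)$: stopping time $T$ w.r.t. $(\mathcal F_n)$ and $\mathcal F_T$-measurable $d\in\mathcal N_0$. $\mathbb C(\boldsymbol\alpha)=\{D:\sup_{\theta\in\Theta_i}\mathsf P_\theta(d=j)\le\alpha_{ij}\ \forall i\ne j\}$. Let $\hat\theta_n=\hat\theta_n(\mathbf X_1^n)$ be $\mathcal F_n$-measurable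 estimators with values in $\Theta$, with a deterministic initial value $\hat\theta_0$. Define $\hat\Lambda_i^*(n)=\prod_{t=1}^n f_{\hat\theta_{t-1},t}(X_t\mid\mathbf X_1^{t-1})\big/\sup_{\theta\in\Theta_i}\prod_{t=1}^n f_{\theta,t}(X_t\mid\mathbf X_1^{t-1})$ and $\hat\lambda_i^*(n)=\log\hat\Lambda_i^*(n)$. Adaptive matrix SPRT (AMSPRT): given thresholds $a_{ij}$, $\hat T_i=\inf\{n\ge1:\hat\lambda_j^*(n)\ge a_{ji}\text{ for all }j\in\mathcal N_0\setminus i\}$, $\hat T=\min_k\hat T_k$, $\hat d=i$ if $\hat T=\hat T_i$ (ties broken by any fixed rule). *)

From HB Require Import structures.
From mathcomp Require Import all_boot all_order all_algebra.
From mathcomp Require Import all_classical all_reals all_analysis.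
Set Implicit Arguments. Unset Strict Implicit. Unset Printing Implicit Defensive.
Import Order.TTheory GRing.Theory Num.Theory.
Local Open Scope classical_set_scope.
Local Open Scope ring_scope.

Section AMSPRT.
Context {dX : measure_display} (X : measurableType dX).

(* Coordinate cylinders of the canonical sequence space: the observation
   X_{t+1} is the coordinate  w t  of a path  w : nat -> X. *)
Definition coord_cyl : set (set (nat -> X)) :=
  [set [set w | B (w t)] | t in [set: nat] & B in measurable].

(* Canonical sample space Omega = X^N with the product sigma-algebra
   sigma(X_1, X_2, ...). *)
Definition seqspace := g_sigma_algebraType coord_cyl.

(* F_n = sigma(X_1,...,X_n)  (F_0 is the trivial sigma-algebra). *)
Definition filt (n : nat) : set (set seqspace) :=
  <<s [set [set w : seqspace | B (w t)] | t in [set t | (t < n)%N]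
                                        & B in measurable] >>.

Definition prefix (n : nat) (w : seqspace) : seq X := mkseq w n.

Definition cyl (n : nat) (B : set (seq X)) : set seqspace :=
  [set w | B (prefix n w)].

Context {R : realType} {P : Type}.

(* Integration w.r.t. nu_{k+1} (x) ... (x) nu_{k+n} as iterated integrals,
   where k = size s is the length of the history s already observed;
   iint nu n g [::] is the integral of g against nu_1 (x) ... (x) nu_n. *)
Fixpoint iint (nu : nat -> {measure set X -> \bar R}) (n : nat)
  (g : seq X -> \bar R) (s : seq X) : \bar R :=
  match n with
  | 0 => g s
  | n'.+1 => (\int[nu (size s).+1]_x iint nu n' g (rcons s x))%E
  end.

(* prod_{t=1}^{size s} f_{th_{t-1}(x_1^{t-1}), t}(x_t | x_1^{t-1});
   f th t x h  stands for  f_{th,t}(x | h). *)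
Definition lik (f : P -> nat -> X -> seq X -> R) (th : nat -> seq X -> P)
  (s : seq X) : R :=
  \prod_(t < size s) f (th t (take t s)) t.+1 (nth point s t) (take t s).

Definition dens (f : P -> nat -> X -> seq X -> R) (theta : P) (s : seq X) : R :=
  lik f (fun _ _ => theta) s.

(* The event  lambda_j^*(n) >= a, i.e.  Lambda_j^*(n) >= e^a, i.e.
   prod_t f_{hat theta_{t-1},t} >= e^a * sup_{theta in Theta_j} p_{theta,n}
   (ratio conventions c/0 = +oo for c >= 0). *)
Definition lam_ge (f : P -> nat -> X -> seq X -> R) (thhat : nat -> seq X -> P)
  (Thj : set P) (n : nat) (a : R) (w : seqspace) : Prop :=
  ((expR a)%:E * ereal_sup [set (dens f theta (prefix n w))%:E | theta in Thj]
    <= (lik f thhat (prefix n w))%:E)%E.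

Definition hits (f : P -> nat -> X -> seq X -> R) (thhat : nat -> seq X -> P)
  (Th : nat -> set P) (N : nat) (a : nat -> nat -> R) (i n : nat)
  (w : seqspace) : Prop :=
  forall j, (j <= N)%N -> j != i -> lam_ge f thhat (Th j) n (a j i) w.

Definition Ti_eq f thhat Th N a (i n : nat) (w : seqspace) : Prop :=
  (1 <= n)%N /\ hits f thhat Th N a i n w /\
  forall m, (1 <= m)%N -> (m < n)%N -> ~ hits f thhat Th N a i m w.

Definition T_eq f thhat Th N a (n : nat) (w : seqspace) : Prop :=
  exists2 k, (k <= N)%N & Ti_eq f thhat Th N a k n w /\
  forall m, (1 <= m)%N -> (m < n)%N ->
    forall k', (k' <= N)%N -> ~ hits f thhat Th N a k' m w.

Definition decides f thhat Th N a (d : seqspace -> nat) (j : nat) : set seqspace :=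
  [set w | exists n, T_eq f thhat Th N a n w /\ d w = j].

Definition in_C (Pr : P -> {measure set seqspace -> \bar R}) (Th : nat -> set P)
  (N : nat) (alpha : nat -> nat -> R) (E : nat -> set seqspace) : Prop :=
  forall i j, (i <= N)%N -> (j <= N)%N -> i != j ->
    (ereal_sup [set Pr theta (E j) | theta in Th i] <= (alpha i j)%:E)%E.

End AMSPRT.

(* Under the adaptive estimator the plug-in likelihood
   L_n = prod_t f_{hat theta_{t-1},t}(X_t | X_1^{t-1}) is itself the density
   of a probability on sequences: integrating out the last coordinate turns
   L_{n+1} into L_n.  On {hat T = n, hat d = j} the statistic
   hat lambda_i^*(n) exceeds a_{ij}, so p_{theta,n} <= e^{-a_ij} L_n there for
   every theta in Theta_i.  Since the events {hat T = n} have prefix-free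
   bases, their L-masses add up to at most L_0 = 1, whence
   P_theta(hat d = j) <= e^{-a_ij}. *)
From Pilot Require Import Defs.
From HB Require Import structures.
From mathcomp Require Import all_boot all_order all_algebra.
From mathcomp Require Import all_classical all_reals all_analysis measurable_realfun.
Set Implicit Arguments. Unset Strict Implicit. Unset Printing Implicit Defensive.
Import Order.TTheory GRing.Theory Num.Theory.
Local Open Scope classical_set_scope.
Local Open Scope ring_scope.

(* The functions integrated below (iterated integrals over histories) are not
   known to be measurable, so we only use the monotonicity and
   superadditivity of the integral of nonnegative functions, which hold
   without measurability through the supremum over simple functions. *)
Section NonnegIntegral.
Local Open Scope ereal_scope.
Context d (T : measurableType d) (R : realType) (mu : {measure set T -> \bar R}).
Import HBNNSimple.

Lemma ge0_le_integral_nomeas (f g : T -> \bar R) : (forall x, 0 <= f x) ->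
  (forall x, f x <= g x) -> \int[mu]_x f x <= \int[mu]_x g x.
Proof.
move=> f0 fg; have g0 x : 0 <= g x by exact: le_trans (f0 x) (fg x).
rewrite !ge0_integralTE //; apply: ereal_sup_le => _ [h hf <-].
by exists h => // x; exact: le_trans (hf x) (fg x).
Qed.

Lemma ereal_supDr_le (S : set \bar R) y z : 0 <= y -> S 0 ->
  (forall s, S s -> s + y <= z) -> ereal_sup S + y <= z.
Proof.
case: y => [r| |] //= y0 S0 Sz.
  by rewrite -leeBrDr //; apply: ge_ereal_sup => s Ss; rewrite leeBrDr //; exact: Sz.
by have := Sz 0 S0; rewrite add0e leye_eq => /eqP ->; exact: leey.
Qed.

Lemma ge0_integralD_ge (f g : T -> \bar R) :
  (forall x, 0 <= f x) -> (forall x, 0 <= g x) ->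
  \int[mu]_x f x + \int[mu]_x g x <= \int[mu]_x (f x + g x).
Proof.
move=> f0 g0; have fg0 x : 0 <= f x + g x by exact: adde_ge0.
have S0 (h : T -> \bar R) : (forall x, 0 <= h x) -> [set sintegral mu k | k in
    [set k : {nnsfun T >-> R} | forall x, (k x)%:E <= h x]] 0.
  by move=> h0; exists nnsfun0 => //; exact: sintegral0.
rewrite [X in _ <= X]ge0_integralTE // [X in X + _ <= _]ge0_integralTE //.
apply: ereal_supDr_le; [exact: integral_ge0|exact: S0|].
move=> _ [h hf <-]; rewrite addeC ge0_integralTE //.
apply: ereal_supDr_le; [exact: sintegral_ge0|exact: S0|].
move=> _ [k kg <-]; rewrite -sintegralD.
apply: ereal_sup_ubound; exists (add_nnsfun k h) => //= x.
by rewrite EFinD addeC; apply: leeD.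
Qed.

Lemma ge0_integral_sum_ge (F : nat -> T -> \bar R) n : (forall i x, 0 <= F i x) ->
  \sum_(i < n) \int[mu]_x F i x <= \int[mu]_x (\sum_(i < n) F i x).
Proof.
move=> F0; elim: n => [|n IH].
  by rewrite big_ord0; apply: integral_ge0 => x _; rewrite big_ord0.
rewrite big_ord_recr /=; apply: le_trans (leeD2r _ IH) _.
under [X in _ <= X]eq_integral do rewrite big_ord_recr /=.
by apply: ge0_integralD_ge => // x; exact: sume_ge0.
Qed.

End NonnegIntegral.

Section IteratedIntegral.
Context {dX : measure_display} (X : measurableType dX) (R : realType).
Variable nu : nat -> {measure set X -> \bar R}.

Lemma iint_ge0 n (g : seq X -> \bar R) s :
  (forall u, size u = n -> (0 <= g (s ++ u))%E) -> (0 <= iint nu n g s)%E.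
Proof.
elim: n s => [|n IH] s g0 /=; first by have := g0 [::] erefl; rewrite cats0.
apply: integral_ge0 => x _; apply: IH => u su.
by rewrite cat_rcons; apply: g0; rewrite /= su.
Qed.

Lemma iint_le n (g g' : seq X -> \bar R) s :
  (forall u, size u = n -> (0 <= g (s ++ u))%E) ->
  (forall u, size u = n -> (g (s ++ u) <= g' (s ++ u))%E) ->
  (iint nu n g s <= iint nu n g' s)%E.
Proof.
elim: n s => [|n IH] s g0 gg' /=; first by have := gg' [::] erefl; rewrite cats0.
apply: ge0_le_integral_nomeas => x.
  by apply: iint_ge0 => u su; rewrite cat_rcons; apply: g0; rewrite /= su.
by apply: IH => u su; rewrite cat_rcons; [apply: g0|apply: gg']; rewrite /= su.
Qed.

Lemma iint0 n s : iint nu n (fun _ => 0%E) s = 0%E.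
Proof.
elim: n s => [|n IH] s //=.
by under eq_integral do rewrite IH; rewrite integral0.
Qed.

(* [iint nu n (mass L C) [::]] is the mass that the density [L] gives to the
   histories of length [n] lying in [C]. *)
Definition mass (L : seq X -> R) (C : set (seq X)) (u : seq X) : \bar R :=
  (\1_C u * L u)%:E.

Variables (L : seq X -> R) (C : nat -> set (seq X)).
Hypothesis L_ge0 : forall s, 0 <= L s.
Hypothesis L_integral_rcons_le :
  forall s, (\int[nu (size s).+1]_x (L (rcons s x))%:E <= (L s)%:E)%E.
Hypothesis C_prefix_free : forall n m s, (n < m)%N -> C m s -> ~ C n (take n s).

Lemma mass_ge0 C' u : (0 <= mass L C' u)%E.
Proof. by rewrite lee_fin mulr_ge0 // indicE. Qed.

Lemma iint_mass_after_stop s j : C (size s) s ->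
  iint nu j.+1 (mass L (C (size s + j.+1))) s = 0%E.
Proof.
move=> Cs; apply/eqP; rewrite eq_le iint_ge0 ?andbT => [|u _]; last exact: mass_ge0.
rewrite -[X in (_ <= X)%E](iint0 j.+1 s).
apply: iint_le => u su; first exact: mass_ge0.
rewrite /mass indicE memNset ?mul0r // => Csu.
have lt_s : (size s < size s + j.+1)%N by rewrite -addn1 leq_add2l.
by have := C_prefix_free lt_s Csu; rewrite take_size_cat.
Qed.

Lemma iint_mass_sum_le k s :
  (\sum_(j < k.+1) iint nu j (mass L (C (size s + j))) s <= (L s)%:E)%E.
Proof.
elim: k s => [|k IH] s.
  by rewrite big_ord1 /= addn0 /mass lee_fin indicE; case: (_ \in _);
    rewrite ?mul1r ?mul0r.
rewrite big_ord_recl /= addn0.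
have [Cs|nCs] := pselect (C (size s) s).
  rewrite big1 => [|j _]; last exact: iint_mass_after_stop.
  by rewrite adde0 /mass indicE mem_set // mul1r.
rewrite {1}/mass indicE memNset // mul0r add0e.
under eq_bigr => j _ do rewrite /bump leq0n add1n add0n.
pose F j x := iint nu j (mass L (C (size s + j.+1))) (rcons s x).
apply: le_trans (ge0_integral_sum_ge (nu (size s).+1) (F := F) k.+1 _) _.
  by move=> j x; apply: iint_ge0 => u _; exact: mass_ge0.
apply: le_trans (L_integral_rcons_le s); apply: ge0_le_integral_nomeas => x.
  by apply: sume_ge0 => j _; apply: iint_ge0 => u _; exact: mass_ge0.
have := IH (rcons s x).
by under eq_bigr do rewrite size_rcons addSnnS.
Qed.

End IteratedIntegral.

Section Likelihood.
Context {dX : measure_display} (X : measurableType dX) (R : realType) (P : Type).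
Variables (nu : nat -> {measure set X -> \bar R}) (f : P -> nat -> X -> seq X -> R).

Lemma lik_rcons (th : nat -> seq X -> P) s x :
  lik f th (rcons s x) = lik f th s * f (th (size s) s) (size s).+1 x s.
Proof.
rewrite /lik size_rcons big_ord_recr /= -cats1 take_size_cat // nth_cat ltnn subnn.
by congr (_ * _); apply: eq_bigr => i _; rewrite take_cat nth_cat ltn_ord.
Qed.

Lemma lik_nil (th : nat -> seq X -> P) : lik f th [::] = 1.
Proof. by rewrite /lik big_ord0. Qed.

Variables (Theta : set P) (thhat : nat -> seq X -> P).
Hypothesis f_cond_density : forall th t s, Theta th -> (1 <= t)%N -> size s = t.-1 ->
  (forall x, 0 <= f th t x s) /\ measurable_fun setT (fun x => f th t x s) /\
  (\int[nu t]_x (f th t x s)%:E = 1)%E.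

Lemma lik_ge0 (th : nat -> seq X -> P) s :
  (forall n u, size u = n -> Theta (th n u)) -> 0 <= lik f th s.
Proof.
move=> thT; rewrite /lik; apply: prodr_ge0 => i _.
have si : size (take i s) = i by rewrite size_takel // ltnW.
exact: (f_cond_density (t := i.+1) (thT _ _ si) isT si).1.
Qed.

Lemma dens_ge0 th s : Theta th -> 0 <= dens f th s.
Proof. by move=> thT; apply: lik_ge0. Qed.

Hypothesis thhat_Theta : forall n s, size s = n -> Theta (thhat n s).

Lemma lik_integral_rcons c s : 0 <= c ->
  (\int[nu (size s).+1]_x (c * lik f thhat (rcons s x))%:E
     = (c * lik f thhat s)%:E)%E.
Proof.
move=> c0; have [f0 [mf f1]] :=
  f_cond_density (t := (size s).+1) (thhat_Theta (erefl (size s))) isT erefl.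
under eq_integral do rewrite lik_rcons mulrA EFinM.
rewrite ge0_integralZl //; first by rewrite f1 mule1.
- exact/measurable_EFinP.
- by move=> x _; rewrite lee_fin.
- by rewrite lee_fin mulr_ge0 // lik_ge0.
Qed.

End Likelihood.

Section Prefixes.
Context {dX : measure_display} (X : measurableType dX).

Lemma take_prefix n m (w : seqspace X) :
  (n <= m)%N -> take n (Defs.prefix m w) = Defs.prefix n w.
Proof.
move=> nm; apply: (@eq_from_nth _ point); first by rewrite size_takel ?size_mkseq.
move=> i; rewrite size_takel ?size_mkseq // => im.
by rewrite nth_take // !nth_mkseq // (leq_trans im nm).
Qed.

Lemma filt_prefix (n : nat) (A : set (seqspace X)) : filt n A ->
  forall w w', Defs.prefix n w = Defs.prefix n w' -> A w -> A w'.
Proof.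
pose D := [set A : set (seqspace X) |
  forall w w', Defs.prefix n w = Defs.prefix n w' -> (A w <-> A w')].
suff filtD : filt n `<=` D by move=> FA w w' ww'; have [] := filtD _ FA w w' ww'.
apply: smallest_sub.
  split => [w w' //|B DB w w' ww'|F DF w w' ww'].
    have [Bww' Bw'w] := DB w w' ww'.
    by split=> -[_ nB]; split=> // ?; apply: nB; [exact: Bw'w|exact: Bww'].
  split=> -[k _ Fk]; exists k => //; have [Fww' Fw'w] := DF k w w' ww'.
    exact: Fww'.
  exact: Fw'w.
move=> _ [t /= tn [B mB <-]] w w' ww' /=.
have : nth point (Defs.prefix n w) t = nth point (Defs.prefix n w') t by rewrite ww'.
by rewrite !nth_mkseq // => ->.
Qed.

Lemma filt_measurable n (A : set (seqspace X)) : filt n A -> measurable A.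
Proof.
apply: smallest_sub; first exact: sigma_algebra_measurable.
by move=> _ [t /= tn [B mB <-]]; apply: sub_gen_smallest; exists t => //; exists B.
Qed.

End Prefixes.

Section StoppingRule.
Context {dX : measure_display} (X : measurableType dX) (R : realType) (P : Type).
Variables (f : P -> nat -> X -> seq X -> R) (thhat : nat -> seq X -> P).
Variables (Th : nat -> set P) (N : nat) (a : nat -> nat -> R).

Lemma T_eq_prefix_lt n m (w w' : seqspace X) : (n < m)%N ->
  Defs.prefix n w = Defs.prefix n w' ->
  T_eq f thhat Th N a n w -> ~ T_eq f thhat Th N a m w'.
Proof.
move=> nm ww' [k kN [[n1 [hk _]] _]] [_ _ [_ first_m]].
by apply: (first_m n n1 nm k kN); move: hk; rewrite /hits /lam_ge ww'.
Qed.

Lemma lam_ge_dens_le i n c (w : seqspace X) th : Th i th ->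
  lam_ge f thhat (Th i) n c w ->
  dens f th (Defs.prefix n w) <= expR (- c) * lik f thhat (Defs.prefix n w).
Proof.
move=> thi; rewrite /lam_ge => lam; set u := Defs.prefix n w in lam *.
have dens_sup : ((dens f th u)%:E <= ereal_sup [set (dens f th' u)%:E | th' in Th i])%E.
  by apply: ereal_sup_ubound; exists th.
have : expR c * dens f th u <= lik f thhat u.
  by rewrite -lee_fin EFinM; apply: le_trans lam; apply: lee_wpmul2l.
by rewrite expRN -(ler_pdivlMl _ _ (expR_gt0 c)).
Qed.

End StoppingRule.

Section ErrorProbability.
Context {dX : measure_display} (X : measurableType dX) (R : realType) (P : Type).
Variables (Theta : set P) (Th : nat -> set P) (N : nat).
Variables (nu : nat -> {measure set X -> \bar R}) (f : P -> nat -> X -> seq X -> R).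
Variables (Pr : P -> probability (seqspace X) R) (thhat : nat -> seq X -> P).
Variables (a : nat -> nat -> R) (d : seqspace X -> nat).

Hypothesis Th_Theta : forall i, (i <= N)%N -> Th i `<=` Theta.
Hypothesis f_cond_density : forall th t s, Theta th -> (1 <= t)%N -> size s = t.-1 ->
  (forall x, 0 <= f th t x s) /\ measurable_fun setT (fun x => f th t x s) /\
  (\int[nu t]_x (f th t x s)%:E = 1)%E.
Hypothesis Pr_cyl : forall th n B, Theta th -> filt n (cyl n B) ->
  Pr th (cyl n B) = iint nu n (fun s => (\1_B s)%:E * (dens f th s)%:E)%E [::].
Hypothesis thhat_Theta : forall n s, size s = n -> Theta (thhat n s).
Hypothesis d_stops : forall n w, T_eq f thhat Th N a n w ->
  (d w <= N)%N /\ Ti_eq f thhat Th N a (d w) n w.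
Hypothesis stop_decide_filt : forall n j,
  filt n [set w | T_eq f thhat Th N a n w /\ d w = j].

Variables (i j : nat) (th : P).
Hypotheses (iN : (i <= N)%N) (ij : i != j) (thi : Th i th).

Let E n := [set w : seqspace X | T_eq f thhat Th N a n w /\ d w = j].
Let B n := Defs.prefix n @` E n.
Let c := expR (- a i j).
Let L u := c * lik f thhat u.

Lemma cyl_stop_decide n : E n = cyl n (B n).
Proof.
apply/seteqP; split => [w Ew|w [w' Ew' ww']]; first by exists w.
by apply: (filt_prefix (@stop_decide_filt n j) ww').
Qed.

Lemma stop_decide_prefix_free n m s : (n < m)%N -> B m s -> ~ B n (take n s).
Proof.
move=> nm [w [Tm _] <-] [w' [Tn _]]; rewrite take_prefix => [ww'|]; last exact: ltnW.
exact: T_eq_prefix_lt nm ww' Tn Tm.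
Qed.

Lemma Pr_stop_decide_le n :
  (Pr th (E n) <= iint nu n (mass L (B n)) [::])%E.
Proof.
have thT := Th_Theta iN thi.
have filt_cyl : filt n (cyl n (B n)).
  by rewrite -cyl_stop_decide; exact: stop_decide_filt.
rewrite cyl_stop_decide Pr_cyl //.
apply: iint_le => u _.
  by rewrite -EFinM lee_fin mulr_ge0 ?indicE // (dens_ge0 f_cond_density).
rewrite /mass -EFinM lee_fin indicE.
case: (boolP (u \in B n)) => [|_]; last by rewrite !mul0r.
rewrite inE => -[w [Tn dw] <-]; rewrite !mul1r.
have [_ [_ [hits_dw _]]] := d_stops Tn; rewrite dw in hits_dw.
exact: lam_ge_dens_le thi (hits_dw i iN ij).
Qed.

Lemma Pr_decides_le : (Pr th (decides f thhat Th N a d j) <= c%:E)%E.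
Proof.
have -> : decides f thhat Th N a d j = \bigcup_n E n.
  by apply/seteqP; split => w [n] //; exists n.
have mE n : measurable (E n) := filt_measurable (@stop_decide_filt n j).
have tE : trivIset setT E.
  move=> n m _ _ [w [[Tn _] [Tm _]]]; case: (ltngtP n m) => // nm; exfalso.
    exact: T_eq_prefix_lt nm erefl Tn Tm.
  exact: T_eq_prefix_lt nm erefl Tm Tn.
have Pr_sum := @measure_sigma_additive _ _ _ (Pr th) E mE tE.
rewrite -(cvg_lim _ Pr_sum) //; apply: lime_le; first exact: cvgP Pr_sum.
apply: nearW => -[|n]; first by rewrite big_geq // lee_fin expR_ge0.
rewrite big_mkord; apply: (@le_trans _ _ (\sum_(k < n.+1)
    iint nu k (mass L (B k)) [::])%E).
  by apply: lee_sum => k _; exact: Pr_stop_decide_le.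
have c0 : 0 <= c := expR_ge0 _.
have := iint_mass_sum_le (L := L) _ _ stop_decide_prefix_free n [::].
rewrite /L lik_nil mulr1; apply.
- by move=> s; rewrite mulr_ge0 // (lik_ge0 f_cond_density).
- by move=> s; rewrite (lik_integral_rcons f_cond_density).
Qed.

End ErrorProbability.

Theorem lemma2
  (dX : measure_display) (X : measurableType dX) (R : realType) (l N : nat)
  (* parameter space Theta = Theta_0 U ... U Theta_N U Theta_in in R^l *)
  (Theta Thin : set 'rV[R]_l) (Th : nat -> set 'rV[R]_l)
  (* reference sigma-finite measures nu_t for the observation X_t *)
  (nu : nat -> {measure set X -> \bar R})
  (* f th t x h = f_{th,t}(x | h) *)
  (f : 'rV[R]_l -> nat -> X -> seq X -> R)
  (Pr : 'rV[R]_l -> probability (seqspace X) R)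
  (* estimators hat theta_n (X_1^n); hat theta_0 = thhat 0 [::] *)
  (thhat : nat -> seq X -> 'rV[R]_l)
  (a : nat -> nat -> R)
  (d : seqspace X -> nat) :
  (1 <= N)%N ->
  (forall i, (i <= N)%N -> Th i `<=` Theta) -> Thin `<=` Theta ->
  Theta = Thin `|` \bigcup_(i in [set i | (i <= N)%N]) Th i ->
  (forall i j, (i <= N)%N -> (j <= N)%N -> i != j -> [disjoint Th i & Th j]) ->
  (forall i, (i <= N)%N -> [disjoint Th i & Thin]) ->
  (forall t, sigma_finite setT (nu t)) ->
  (* each f_{th,t}(. | x_1^{t-1}) is a conditional density w.r.t. nu_t *)
  (forall th t s, Theta th -> (1 <= t)%N -> size s = t.-1 ->
     (forall x, 0 <= f th t x s) /\ measurable_fun setT (fun x => f th t x s) /\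
     (\int[nu t]_x (f th t x s)%:E = 1)%E) ->
  (* the restriction of P_theta to F_n has density p_{theta,n} w.r.t.
     nu_1 (x) ... (x) nu_n *)
  (forall th n B, Theta th -> filt n (cyl n B) ->
     Pr th (cyl n B) = iint nu n (fun s => (\1_B s)%:E * (dens f th s)%:E)%E [::]) ->
  (* these restrictions are mutually absolutely continuous *)
  (forall th th' n A, Theta th -> Theta th' -> filt n A ->
     Pr th A = 0%E -> Pr th' A = 0%E) ->
  (* estimators are F_n-measurable (functions of X_1^n) with values in Theta *)
  (forall n s, size s = n -> Theta (thhat n s)) ->
  (* hat d = i when hat T = hat T_i (ties broken by an arbitrary rule) *)
  (forall n w, T_eq f thhat Th N a n w ->
     (d w <= N)%N /\ Ti_eq f thhat Th N a (d w) n w) ->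
  (* (hat T, hat d) is a test: {hat T = n, hat d = j} is F_n-measurable *)
  (forall n j, filt n [set w | T_eq f thhat Th N a n w /\ d w = j]) ->
  (forall i j, (i <= N)%N -> (j <= N)%N -> i != j ->
     (ereal_sup [set Pr th (decides f thhat Th N a d j) | th in Th i]
        <= (expR (- a i j))%:E)%E)
  /\
  (forall alpha : nat -> nat -> R,
     (forall i j, (i <= N)%N -> (j <= N)%N -> i != j -> 0 < alpha i j) ->
     (forall i j, (i <= N)%N -> (j <= N)%N -> i != j -> a i j = ln (alpha i j)^-1) ->
     in_C (fun th => Pr th) Th N alpha (decides f thhat Th N a d)).
Proof.
move=> _ Th_Theta _ _ _ _ _ f_dens Pr_cyl _ thhat_Theta d_stops stop_filt.
have error_le i j : (i <= N)%N -> (j <= N)%N -> i != j ->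
    (ereal_sup [set Pr th (decides f thhat Th N a d j) | th in Th i]
       <= (expR (- a i j))%:E)%E.
  move=> iN _ ij; apply: ge_ereal_sup => _ [th thi <-].
  exact: (Pr_decides_le Th_Theta f_dens Pr_cyl thhat_Theta d_stops stop_filt iN ij thi).
split=> // alpha alpha_gt0 a_ln i j iN jN ij.
have := error_le i j iN jN ij.
by rewrite a_ln // expRN lnK ?invrK // posrE invr_gt0 alpha_gt0.
Qed.
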